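(* Let $(\frac pq,\frac rs)$ be a Farey pair of order $n$ with $q\ge 2$, let $d=\lfloor n/q\rfloor$, let $\alpha\in(0,1)$, $\beta=1-\alpha$, and let $\phi_\alpha(t)=(t^q-\beta)^d-\alpha^d t^{qd-s}$. If $t_0$ is a multiple root of $\phi_\alpha$, then $t_0^s$ is a real number and $t_0^s\ne 1$.
   Context: $\mathcal{F}_n=\{p/q:0\le p<q\le n,\ \gcd(p,q)=1\}$. A Farey pair of order $n$ is a pair $(\frac pq,\frac rs)$ of elements of $\mathcal{F}_n$ with $\frac pq<\frac rs$ and no element of $\mathcal{F}_n$ strictly between them. $\phi_\alpha$ (the Ito rational function of the pair) is regarded as a rational function of the complex variable $t$. *)

From HB Require Import structures.
From mathcomp Require Import all_boot all_order all_algebra.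
From mathcomp Require Import complex.
From mathcomp Require Import reals.
Set Implicit Arguments. Unset Strict Implicit. Unset Printing Implicit Defensive.
Import Order.TTheory GRing.Theory Num.Theory.
Local Open Scope ring_scope.

(* Farey pair (p/q, r/s) of order n: both fractions are in F_n (reduced,
   0 <= numerator < denominator <= n), p/q < r/s, and no element of F_n lies
   strictly between them (the coprimality condition on a/b is irrelevant for
   "lies strictly between", since every rational a/b with a<b<=n reduces to an
   element of F_n). *)
Definition farey_pair (n p q r s : nat) : Prop :=
  [/\ (p < q <= n)%N /\ coprime p q, (r < s <= n)%N /\ coprime r s,
      (p%:R / q%:R < r%:R / s%:R :> rat) &
      forall a b : nat, (a < b <= n)%N -> coprime a b ->
        ~ ((p%:R / q%:R < a%:R / b%:R :> rat) /\ (a%:R / b%:R < r%:R / s%:R :> rat))].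

(* phi_alpha(t) = (t^q - beta)^d - alpha^d t^(qd - s), beta = 1 - alpha,
   as a rational function num/den of t with num, den polynomials over C = R[i]:
   if s <= qd it is the polynomial (t^q - beta)^d - alpha^d t^(qd-s) (den = 1);
   if s > qd it is ((t^q - beta)^d t^(s-qd) - alpha^d) / t^(s-qd). *)
Definition phi_num (R : realType) (alpha : R) (q s d : nat) : {poly R[i]} :=
  let a : R[i] := (alpha%:C)%C in
  let b : R[i] := ((1 - alpha)%:C)%C in
  if (s <= q * d)%N then ('X^q - b%:P) ^+ d - (a ^+ d)%:P * 'X^(q * d - s)
  else ('X^q - b%:P) ^+ d * 'X^(s - q * d) - (a ^+ d)%:P.

Definition phi_den (R : realType) (q s d : nat) : {poly R[i]} :=
  'X^(s - q * d).

(* t0 is a multiple root of the rational function num/den: t0 is not a pole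
   (den(t0) <> 0) and t0 is a zero of num of multiplicity at least 2.
   (num and den have no common root, so this is the order of phi at t0.) *)
Definition multiple_root_rat (R : realType) (num den : {poly R[i]}) (t0 : R[i]) :=
  den.[t0] != 0 /\ (('X - t0%:P) ^+ 2 %| num)%R.

From HB Require Import structures.
From mathcomp Require Import all_boot all_order all_algebra.
From mathcomp Require Import complex reals.
From mathcomp Require Import ring.

Set Implicit Arguments.
Unset Strict Implicit.
Unset Printing Implicit Defensive.
Import Order.TTheory GRing.Theory Num.Theory.
Local Open Scope ring_scope.

(* Put u = t0^q, b = 1 - alpha and d = n %/ q (d > 0 because q <= n; this and
   s > r >= 0 are all that is used of the Farey pair).  Eliminating alpha^d
   between phi(t0) = 0 and t0 phi'(t0) = 0 leaves the linear relation
   s (u - b) = - q d b, so u is a real number below b, and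
   t0^s = u^d alpha^d / (u - b)^d is real.  If t0^s = 1, then |u| = 1 and
   |u - b| = alpha, so u = b - alpha, which has modulus < 1. *)

Lemma double_root_deriv_eq0 (F : fieldType) (p : {poly F}) (t : F) :
  ('X - t%:P) ^+ 2 %| p -> p.[t] = 0 /\ (p^`()).[t] = 0.
Proof.
move=> /dvdpP[g ->]; rewrite derivM deriv_exp derivXsubC.
by rewrite !hornerE subrr expr0n /= addrK !mulr0 addr0.
Qed.

(* Working with X p' instead of p' keeps every exponent free of predecessors. *)
Section EulerOperator.

Variable R : comNzRingType.
Implicit Types (p r : {poly R}) (c : R).

Lemma mulX_derivXn n : 'X * ('X^n)^`() = 'X^n *+ n :> {poly R}.
Proof. by rewrite derivXn; case: n => [|n]; rewrite ?mulr0n ?mulr0 // mulrnAr -exprS. Qed.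

Lemma mulX_derivM p r : 'X * (p * r)^`() = 'X * p^`() * r + p * ('X * r^`()).
Proof. by rewrite derivM mulrDr mulrA mulrCA. Qed.

Lemma mulX_deriv_expXnsubC q d c :
  'X * (('X^q - c%:P) ^+ d)^`() = ('X^q - c%:P) ^+ d.-1 * 'X^q *+ (q * d).
Proof.
by rewrite deriv_exp derivB derivC subr0 mulrnAr mulrA mulX_derivXn mulrnAl -mulrnA mulrC.
Qed.

End EulerOperator.

Section DoubleRootEquations.

Variables (F : fieldType) (q d s : nat) (b A t : F).
Hypotheses (d_gt0 : (0 < d)%N) (A_neq0 : A != 0).

Let exprd_pred (x : F) : x ^+ d = x ^+ d.-1 * x.
Proof. by rewrite -exprSr prednK. Qed.

Lemma double_root_eqs_le : (s <= q * d)%N -> t != 0 ->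
  ('X - t%:P) ^+ 2 %| ('X^q - b%:P) ^+ d - A%:P * 'X^(q * d - s) ->
  (t ^+ q - b) *+ s = - (b *+ (q * d)) /\ t ^+ s * (t ^+ q - b) ^+ d = t ^+ (q * d) * A.
Proof.
set k := (q * d - s)%N => le_s_qd t_neq0 /double_root_deriv_eq0[E0 E1].
have qdE : (q * d = s + k)%N by rewrite subnKC.
have {E1} : ('X * (('X^q - b%:P) ^+ d - A%:P * 'X^k)^`()).[t] = 0.
  by rewrite hornerM E1 mulr0.
rewrite derivB mulrBr mulX_deriv_expXnsubC mulX_derivM derivC mulr0 mul0r add0r.
rewrite mulX_derivXn !(hornerE, hornerMn) {}qdE => E1.
rewrite !hornerE in E0; have {}E0 := subr0_eq E0.
have ub : t ^+ q - b != 0.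
  apply: contraNneq (mulf_neq0 A_neq0 (expf_neq0 k t_neq0)) => ub.
  by rewrite -E0 ub expf_eq0 d_gt0 eqxx.
have key : t ^+ q *+ s + b *+ k = 0.
  have : (t ^+ q - b) ^+ d.-1 * (t ^+ q *+ s + b *+ k) = 0.
    by rewrite -E1 mulrnAr -E0 exprd_pred; ring.
  by move/eqP; rewrite mulf_eq0 expf_eq0 (negbTE ub) andbF => /eqP.
split; last by rewrite E0 exprD; ring.
by apply/eqP; rewrite -subr_eq0 -key; apply/eqP; ring.
Qed.

Lemma double_root_eqs_gt : (q * d < s)%N ->
  ('X - t%:P) ^+ 2 %| ('X^q - b%:P) ^+ d * 'X^(s - q * d) - A%:P ->
  (t ^+ q - b) *+ s = - (b *+ (q * d)) /\ t ^+ s * (t ^+ q - b) ^+ d = t ^+ (q * d) * A.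
Proof.
set e := (s - q * d)%N => lt_qd_s /double_root_deriv_eq0[E0 E1].
have sE : s = (q * d + e)%N by rewrite subnKC // ltnW.
have {E1} : ('X * (('X^q - b%:P) ^+ d * 'X^e - A%:P)^`()).[t] = 0.
  by rewrite hornerM E1 mulr0.
rewrite derivB derivC subr0 mulX_derivM mulX_deriv_expXnsubC mulX_derivXn.
rewrite !(hornerE, hornerMn) => E1.
rewrite !hornerE in E0; have {}E0 := subr0_eq E0.
have /andP[ub te] : (t ^+ q - b != 0) && (t ^+ e != 0).
  by move: A_neq0; rewrite -E0 mulf_eq0 negb_or expf_eq0 d_gt0.
have key : t ^+ q *+ (q * d) + (t ^+ q - b) *+ e = 0.
  have : (t ^+ q - b) ^+ d.-1 * t ^+ e * (t ^+ q *+ (q * d) + (t ^+ q - b) *+ e) = 0.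
    by rewrite -E1 exprd_pred; ring.
  by move/eqP; rewrite !mulf_eq0 expf_eq0 (negbTE ub) (negbTE te) andbF => /eqP.
split; last by rewrite -E0 sE exprD; ring.
by apply/eqP; rewrite -subr_eq0 -key sE; apply/eqP; ring.
Qed.

End DoubleRootEquations.

Lemma phi_num_double_root_eqs (R : realType) (alpha : R) (q s d : nat) (t : R[i]) :
  (0 < d)%N -> alpha != 0 -> t != 0 ->
  ('X - t%:P) ^+ 2 %| phi_num alpha q s d ->
  (t ^+ q - ((1 - alpha)%:C)%C) *+ s = - (((1 - alpha)%:C)%C *+ (q * d)) /\
  t ^+ s * (t ^+ q - ((1 - alpha)%:C)%C) ^+ d = t ^+ (q * d) * (alpha%:C)%C ^+ d.
Proof.
move=> d_gt0 alpha_neq0 t_neq0.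
have A_neq0 : (alpha%:C)%C ^+ d != 0 :> R[i] by rewrite expf_neq0 // fmorph_eq0.
rewrite /phi_num; case: leqP => h.
  exact: double_root_eqs_le.
exact: double_root_eqs_gt.
Qed.

Lemma expr_real_neq1 (C : numClosedFieldType) (q s d : nat) (a b t : C) :
  (0 < s)%N -> (0 < q * d)%N -> 0 < a -> 0 < b -> a + b = 1 ->
  (t ^+ q - b) *+ s = - (b *+ (q * d)) ->
  t ^+ s * (t ^+ q - b) ^+ d = t ^+ (q * d) * a ^+ d ->
  t ^+ s \is Num.real /\ t ^+ s != 1.
Proof.
move=> s_gt0 qd_gt0 a_gt0 b_gt0 ab1 E1 E2.
have /andP[_ d_gt0] : (0 < q)%N && (0 < d)%N by rewrite -muln_gt0.
set u := t ^+ q in E1 E2 *.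
have ub_lt0 : u - b < 0.
  have sR_neq0 : s%:R != 0 :> C by rewrite pnatr_eq0 -lt0n.
  have -> : u - b = - (b *+ (q * d)) / s%:R by rewrite -E1 -mulr_natr mulfK.
  by rewrite mulNr oppr_lt0 divr_gt0 ?pmulrn_lgt0 ?ltr0n.
have u_real : u \is Num.real.
  by rewrite -(subrK b u); apply: rpredD; [exact: ltr0_real | exact: gtr0_real].
have tsE : t ^+ s = u ^+ d * a ^+ d / (t ^+ q - b) ^+ d.
  by rewrite -exprM -E2 mulfK // expf_neq0 // lt_eqF.
split.
  rewrite tsE; apply: rpredM; first by apply: rpredM; apply: rpredX; last exact: gtr0_real.
  by rewrite rpredV; apply: rpredX; exact: ltr0_real.
apply/eqP => ts1.
have t1 : `|t| = 1 by apply/eqP; rewrite -(pexpr_eq1 s_gt0) // -normrX ts1 normr1.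
have uba : b - u = a.
  rewrite -opprB -(ltr0_norm ub_lt0); apply/eqP.
  rewrite -(eqrXn2 d_gt0) ?normr_ge0 ?(ltW a_gt0) //.
  by move: (congr1 Num.norm E2); rewrite !normrM !normrX t1 !expr1n !mul1r (gtr0_norm a_gt0) => ->.
have : `|b - a| < 1.
  rewrite real_ltr_norml ?rpredB ?gtr0_real // -ab1 opprD [b - a]addrC.
  by rewrite ltrD2l ltrD2r !gtrN.
by rewrite -uba opprB addrC subrK normrX t1 expr1n ltxx.
Qed.

Theorem lemma4p1 (R : realType) (n p q r s : nat) (alpha : R) (t0 : R[i]) :
  farey_pair n p q r s -> (2 <= q)%N ->
  0 < alpha < 1 ->
  multiple_root_rat (phi_num alpha q s (n %/ q)) (phi_den R q s (n %/ q)) t0 ->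
  t0 ^+ s \is Num.real /\ t0 ^+ s != 1.
Proof.
move=> [[/andP[_ q_le_n] _] [/andP[r_lt_s _] _] _ _] q_ge2.
move=> /andP[alpha_gt0 alpha_lt1] [_ dvd_phi].
have s_gt0 : (0 < s)%N := leq_ltn_trans (leq0n r) r_lt_s.
have q_gt0 : (0 < q)%N := ltnW q_ge2.
have d_gt0 : (0 < n %/ q)%N by rewrite divn_gt0.
have [->|t0_neq0] := eqVneq t0 0.
  by rewrite expr0n gtn_eqF //= rpred0 eq_sym oner_eq0.
have [E1 E2] := phi_num_double_root_eqs d_gt0 (lt0r_neq0 alpha_gt0) t0_neq0 dvd_phi.
apply: expr_real_neq1 E1 E2; rewrite ?muln_gt0 ?q_gt0 ?ltcR ?subr_gt0 //.
by rewrite -rmorphD addrC subrK rmorph1.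
Qed.
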